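(* Let $\mathfrak{n}$ be a real nilpotent Lie algebra and $J$ a $3$-step complex structure on $\mathfrak{n}$. Then no inner product on $\mathfrak{n}$ that is Hermitian with respect to $J$ is pluriclosed.
   Context: A complex structure on a real Lie algebra $\mathfrak{g}$ is a linear map $J:\mathfrak{g}\to\mathfrak{g}$ with $J^2=-I$ and $N_J(x,y):=[x,y]+J([Jx,y]+[x,Jy])-[Jx,Jy]=0$ for all $x,y\in\mathfrak{g}$. Given such $J$, define inductively $\mathfrak{a}_0(J)=0$ and $\mathfrak{a}_\ell(J)=\{x\in\mathfrak{g}: [x,\mathfrak{g}]\subset\mathfrak{a}_{\ell-1}(J)\text{ and }[Jx,\mathfrak{g}]\subset\mathfrak{a}_{\ell-1}(J)\}$ for $\ell\ge1$; $J$ is $t$-step if $t$ is the smallest integer with $\mathfrak{a}_t(J)=\mathfrak{g}$. An inner product $\langle\cdot,\cdot\rangle$ is Hermitian if $\langle Jx,Jy\rangle=\langle x,y\rangle$. Its torsion 3-form is $c(x,y,z)=-\langle[Jx,Jy],z\rangle-\langle[Jy,Jz],x\rangle-\langle[Jz,Jx],y\rangle$, and $\langle\cdot,\cdot\rangle$ is pluriclosed if $dc=0$, where $d$ is the Chevalley–Eilenberg differential on $\Lambda^*\mathfrak{g}^*$ (equivalently the corresponding left-invariant 3-form on the Lie group is closed). *)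

From HB Require Import structures.
From mathcomp Require Import all_boot all_order all_algebra.
From mathcomp Require Import reals.
Set Implicit Arguments. Unset Strict Implicit. Unset Printing Implicit Defensive.
Import Order.TTheory GRing.Theory Num.Theory.
Local Open Scope ring_scope.

Section LieDefs.
Variables (R : realType) (n : nat).
Notation V := 'rV[R]_n.

Definition is_lie_bracket (br : V -> V -> V) : Prop :=
  [/\ (forall (a : R) (x y z : V), br (a *: x + y) z = a *: br x z + br y z),
      (forall (a : R) (x y z : V), br z (a *: x + y) = a *: br z x + br z y),
      (forall x : V, br x x = 0) &
      (forall x y z : V, br x (br y z) + br y (br z x) + br z (br x y) = 0)].

Fixpoint iter_br (br : V -> V -> V) (xs : seq V) (x : V) : V :=
  match xs with
  | [::] => x
  | y :: ys => br y (iter_br br ys x)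
  end.

(* Nilpotent: some term of the lower central series vanishes, i.e. all
   brackets of length k+1 vanish for some k (they span g^{k+1}). *)
Definition lie_nilpotent (br : V -> V -> V) : Prop :=
  exists k : nat, forall (xs : seq V) (x : V), size xs = k -> iter_br br xs x = 0.

Definition appJ (J : 'M[R]_n) (x : V) : V := x *m J.

(* Complex structure: J^2 = -I and vanishing Nijenhuis tensor. *)
Definition is_complex_structure (br : V -> V -> V) (J : 'M[R]_n) : Prop :=
  J *m J = - 1%:M /\
  forall x y : V,
    br x y + appJ J (br (appJ J x) y + br x (appJ J y))
      - br (appJ J x) (appJ J y) = 0.

Fixpoint aJ (br : V -> V -> V) (J : 'M[R]_n) (l : nat) : V -> Prop :=
  match l with
  | 0 => fun x => x = 0
  | l'.+1 => fun x => forall y : V,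
      aJ br J l' (br x y) /\ aJ br J l' (br (appJ J x) y)
  end.

Definition is_t_step (br : V -> V -> V) (J : 'M[R]_n) (t : nat) : Prop :=
  (forall x : V, aJ br J t x) /\
  (forall s : nat, (s < t)%N -> ~ (forall x : V, aJ br J s x)).

Definition is_inner_product (ip : V -> V -> R) : Prop :=
  [/\ (forall (a : R) (x y z : V), ip (a *: x + y) z = a * ip x z + ip y z),
      (forall x y : V, ip x y = ip y x) &
      (forall x : V, x != 0 -> 0 < ip x x)].

Definition is_hermitian (J : 'M[R]_n) (ip : V -> V -> R) : Prop :=
  forall x y : V, ip (appJ J x) (appJ J y) = ip x y.

Definition torsion (br : V -> V -> V) (J : 'M[R]_n) (ip : V -> V -> R)
  (x y z : V) : R :=
  - ip (br (appJ J x) (appJ J y)) z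
  - ip (br (appJ J y) (appJ J z)) x
  - ip (br (appJ J z) (appJ J x)) y.

(* Chevalley-Eilenberg differential of a 3-form on V:
   dc(x0,x1,x2,x3) = sum_{i<j} (-1)^(i+j) c([xi,xj], ..., ^xi, ..., ^xj, ...) *)
Definition CE_d3 (br : V -> V -> V) (c : V -> V -> V -> R)
  (x0 x1 x2 x3 : V) : R :=
  - c (br x0 x1) x2 x3 + c (br x0 x2) x1 x3 - c (br x0 x3) x1 x2
  - c (br x1 x2) x0 x3 + c (br x1 x3) x0 x2 - c (br x2 x3) x0 x1.

Definition is_pluriclosed (br : V -> V -> V) (J : 'M[R]_n) (ip : V -> V -> R)
  : Prop :=
  forall x0 x1 x2 x3 : V, CE_d3 br (torsion br J ip) x0 x1 x2 x3 = 0.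

End LieDefs.

From HB Require Import structures.
From mathcomp Require Import all_boot all_order all_algebra.
From mathcomp Require Import reals.
From mathcomp Require Import lra.
Set Implicit Arguments. Unset Strict Implicit. Unset Printing Implicit Defensive.
Import Order.TTheory GRing.Theory Num.Theory.
Local Open Scope ring_scope.

(* If J is 3-step, every bracket B = [x, y] lies in a_2(J).  Evaluating dc = 0
   on (x, y, z, [JB, Jz]) for z in a_2(J) leaves only |[JB, Jz]|^2, so JB
   commutes with a_2(J).  Evaluating dc = 0 on (X, JX, B, JB) then leaves
   |[X, B]|^2 + |[X, JB]|^2 + |[JX, B]|^2 + |[JX, JB]|^2, so B and JB are
   central, i.e. B lies in a_1(J).  Hence a_2(J) is already everything,
   contradicting that J is 3-step. *)

Section LieBracket.
Variables (R : realType) (n : nat) (br : 'rV[R]_n -> 'rV[R]_n -> 'rV[R]_n).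
Hypothesis br_lie : is_lie_bracket br.

Lemma lieDl x y z : br (x + y) z = br x z + br y z.
Proof. by case: br_lie => brZl _ _ _; have := brZl 1 x y z; rewrite !scale1r. Qed.

Lemma lieDr x y z : br z (x + y) = br z x + br z y.
Proof. by case: br_lie => _ brZr _ _; have := brZr 1 x y z; rewrite !scale1r. Qed.

Lemma lie0r z : br 0 z = 0.
Proof.
by case: br_lie => brZl _ _ _; have := brZl (-1) z z z; rewrite !scaleN1r !addNr.
Qed.

Lemma lier0 z : br z 0 = 0.
Proof.
by case: br_lie => _ brZr _ _; have := brZr (-1) z z z; rewrite !scaleN1r !addNr.
Qed.

Lemma lieNr x z : br (- x) z = - br x z.
Proof.
case: br_lie => brZl _ _ _; have := brZl (-1) x 0 z.
by rewrite !addr0 lie0r addr0 !scaleN1r.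
Qed.

Lemma lierN x z : br z (- x) = - br z x.
Proof.
case: br_lie => _ brZr _ _; have := brZr (-1) x 0 z.
by rewrite !addr0 lier0 addr0 !scaleN1r.
Qed.

Lemma lieC x y : br x y = - br y x.
Proof.
case: br_lie => _ _ brxx _; have := brxx (x + y).
by rewrite lieDl !lieDr !brxx add0r addr0 => /eqP; rewrite addr_eq0 => /eqP.
Qed.

End LieBracket.

Section InnerProduct.
Variables (R : realType) (n : nat) (ip : 'rV[R]_n -> 'rV[R]_n -> R).
Hypothesis ip_inner : is_inner_product ip.

Lemma ip0l z : ip 0 z = 0.
Proof.
case: ip_inner => ipZl _ _; have := ipZl (-1) z z z.
by rewrite scaleN1r addNr mulN1r addNr.
Qed.

Lemma ip0r z : ip z 0 = 0.
Proof. by case: ip_inner => _ ipC _; rewrite ipC ip0l. Qed.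

Lemma ipNl x z : ip (- x) z = - ip x z.
Proof.
case: ip_inner => ipZl _ _; have := ipZl (-1) x 0 z.
by rewrite !addr0 ip0l addr0 mulN1r scaleN1r.
Qed.

Lemma ipxx_ge0 u : 0 <= ip u u.
Proof.
case: ip_inner => _ _ ip_gt0; have [->|u0] := eqVneq u 0; first by rewrite ip0l.
exact: ltW (ip_gt0 _ u0).
Qed.

Lemma ipxx_eq0 u : ip u u = 0 -> u = 0.
Proof.
case: ip_inner => _ _ ip_gt0 uu0; apply/eqP; apply: contraLR isT => u0.
by have := ip_gt0 _ u0; rewrite uu0 ltxx.
Qed.

End InnerProduct.

Section AscendingSeries.
Variables (R : realType) (n : nat) (br : 'rV[R]_n -> 'rV[R]_n -> 'rV[R]_n).
Variable J : 'M[R]_n.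
Hypothesis br_lie : is_lie_bracket br.
Hypothesis JJ : J *m J = - 1%:M.

Local Notation Jf := (appJ J).
Local Notation a := (aJ br J).

Lemma appJK x : Jf (Jf x) = - x.
Proof. by rewrite /appJ -mulmxA JJ mulmxN mulmx1. Qed.

Lemma appJ0 : Jf 0 = 0.
Proof. by rewrite /appJ mul0mx. Qed.

Lemma appJN x : Jf (- x) = - Jf x.
Proof. by rewrite /appJ mulNmx. Qed.

Lemma aJN l x : a l x -> a l (- x).
Proof.
elim: l x => [x /= ->|l IHl x ax y]; first by rewrite oppr0.
by have [axy aJxy] := ax y; rewrite appJN !lieNr //; split; apply: IHl.
Qed.

Lemma aJ_appJ l x : a l x -> a l (Jf x).
Proof.
case: l => [/= ->|l ax y]; first exact: appJ0.
by have [axy aJxy] := ax y; rewrite appJK lieNr //; split => //; apply: aJN.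
Qed.

Lemma aJ_brr l x z : a l.+1 z -> a l (br x z).
Proof. by move=> az; rewrite (lieC br_lie); apply: aJN; case: (az x). Qed.

Lemma aJ1_central w : a 1 w ->
  [/\ forall t, br w t = 0, forall t, br t w = 0,
      forall t, br (Jf w) t = 0 & forall t, br t (Jf w) = 0].
Proof.
move=> aw; split=> t; try by case: (aw t).
- by rewrite (lieC br_lie); case: (aw t) => -> _; rewrite oppr0.
- by rewrite (lieC br_lie); case: (aw t) => _ ->; rewrite oppr0.
Qed.

End AscendingSeries.

Section PluriclosedThreeStep.
Variables (R : realType) (n : nat) (br : 'rV[R]_n -> 'rV[R]_n -> 'rV[R]_n).
Variables (J : 'M[R]_n) (ip : 'rV[R]_n -> 'rV[R]_n -> R).
Hypothesis br_lie : is_lie_bracket br.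
Hypothesis JJ : J *m J = - 1%:M.
Hypothesis ip_inner : is_inner_product ip.
Hypothesis ip_pluriclosed : is_pluriclosed br J ip.
Hypothesis aJ2_br : forall x y, aJ br J 2 (br x y).

Local Notation Jf := (appJ J).

Lemma brJ_appJ_aJ2 x y z : aJ br J 2 z -> br (Jf (br x y)) (Jf z) = 0.
Proof.
move=> az; set w := br (Jf (br x y)) (Jf z).
have aw : aJ br J 1 w by case: (aJ_appJ br_lie JJ (aJ2_br x y) (Jf z)).
have [_ w_r Jw_l Jw_r] := aJ1_central br_lie aw.
have [_ _ Jxz_l _] := aJ1_central br_lie (aJ_brr br_lie x az).
have [_ _ Jyz_l _] := aJ1_central br_lie (aJ_brr br_lie y az).
have := ip_pluriclosed x y z w; rewrite /CE_d3 /torsion -/w.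
rewrite !w_r !Jw_l !Jw_r !Jxz_l !Jyz_l !appJ0 !(lie0r br_lie) !(lier0 br_lie).
rewrite !(ip0l ip_inner) !(ip0r ip_inner) => dc0.
by apply: (ipxx_eq0 ip_inner); lra.
Qed.

Lemma brJ_aJ2 x y z : aJ br J 2 z -> br (Jf (br x y)) z = 0.
Proof.
move=> az; have := brJ_appJ_aJ2 x y (aJ_appJ br_lie JJ az).
by rewrite (appJK JJ) (lierN br_lie) => /eqP; rewrite oppr_eq0 => /eqP.
Qed.

Lemma br_derived_eq0 x y X : br X (br x y) = 0 /\ br X (Jf (br x y)) = 0.
Proof.
set B := br x y; set A := br X (Jf X).
have aB : aJ br J 2 B by exact: aJ2_br.
have aJB := aJ_appJ br_lie JJ aB.
have JA_B : br (Jf A) B = 0 by apply: brJ_aJ2.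
have JA_JB : br (Jf A) (Jf B) = 0 by apply: brJ_aJ2.
have JB_B : br (Jf B) B = 0 by apply: brJ_aJ2.
have B_JA : br B (Jf A) = 0 by rewrite (lieC br_lie) JA_B oppr0.
have B_JB : br B (Jf B) = 0 by rewrite (lieC br_lie) JB_B oppr0.
have [_ _ XB_l XB_r] := aJ1_central br_lie (aJ_brr br_lie X aB).
have [_ _ XJB_l XJB_r] := aJ1_central br_lie (aJ_brr br_lie X aJB).
have [_ _ JXB_l JXB_r] := aJ1_central br_lie (aJ_brr br_lie (Jf X) aB).
have [_ _ JXJB_l JXJB_r] := aJ1_central br_lie (aJ_brr br_lie (Jf X) aJB).
have := ip_pluriclosed X (Jf X) B (Jf B); rewrite /CE_d3 /torsion !(appJK JJ).
rewrite ?(XB_l, XB_r, XJB_l, XJB_r, JXB_l, JXB_r, JXJB_l, JXJB_r,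
  JA_B, JA_JB, JB_B, B_JA, B_JB, appJ0, lieNr br_lie, lierN br_lie,
  lie0r br_lie, lier0 br_lie, opprK, oppr0,
  ip0l ip_inner, ip0r ip_inner, ipNl ip_inner).
move=> dc0.
have := ipxx_ge0 ip_inner (br X B); have := ipxx_ge0 ip_inner (br X (Jf B)).
have := ipxx_ge0 ip_inner (br (Jf X) B).
have := ipxx_ge0 ip_inner (br (Jf X) (Jf B)).
by split; apply: (ipxx_eq0 ip_inner); lra.
Qed.

Lemma aJ2_full x : aJ br J 2 x.
Proof.
have aJ1_br u v : aJ br J 1 (br u v).
  move=> t; have [tuv0 tJuv0] := br_derived_eq0 u v t.
  by rewrite (lieC br_lie _ t) (lieC br_lie _ t) tuv0 tJuv0 oppr0.
by move=> y; split; apply: aJ1_br.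
Qed.

End PluriclosedThreeStep.

Theorem mainTheorem14 (R : realType) (n : nat)
  (br : 'rV[R]_n -> 'rV[R]_n -> 'rV[R]_n) (J : 'M[R]_n) :
  is_lie_bracket br -> lie_nilpotent br ->
  is_complex_structure br J -> is_t_step br J 3 ->
  forall ip : 'rV[R]_n -> 'rV[R]_n -> R,
    is_inner_product ip -> is_hermitian J ip -> ~ is_pluriclosed br J ip.
Proof.
move=> br_lie _ [JJ _] [aJ3_full aJ_notfull] ip ip_inner _ ip_pluriclosed.
have aJ2_br x y : aJ br J 2 (br x y) by case: (aJ3_full x y).
apply: (aJ_notfull 2%N) => //.
exact: aJ2_full br_lie JJ ip_inner ip_pluriclosed aJ2_br.
Qed.
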